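(* Let $\mathcal{I}$ be an interval hypergraph on $[n]$ closed under intersection. Then for every $j\in\mathcal{J}_{\mathcal{I}}$, the acyclic orientation $A_j$ is join irreducible in the lattice $P_{\mathcal{I}}$.
   Context: An interval hypergraph $\mathcal{I}$ on $[n]$ is a collection of intervals of $[n]$ containing all singletons; it is closed under intersection if $I,J\in\mathcal{I}$, $I\cap J\ne\varnothing$ imply $I\cap J\in\mathcal{I}$. An orientation is a map $O:\mathcal{I}\to[n]$ with $O(I)\in I$; it is acyclic if there are no $H_1,\dots,H_k$, $k\ge2$, with $O(H_{i+1})\in H_i\setminus\{O(H_i)\}$ for $i\in[k-1]$ and $O(H_1)\in H_k\setminus\{O(H_k)\}$. Orientations $O\ne O'$ are related by an increasing flip (from $O$ to $O'$) if there exist $1\le i<j\le n$ such that for all $H$: if $O(H)\ne O'(H)$ then $O(H)=i$, $O'(H)=j$; and if $\{i,j\}\subseteq H$ then $O(H)=i\iff O'(H)=j$. $P_{\mathcal{I}}$ is the transitive closure of the increasing flip relation on acyclic orientations (a lattice here). Let $\mathcal{J}_{\mathcal{I}}=\bigcup_{I\in\mathcal{I}}I\setminus\{\min I\}$. For $j\in\mathcal{J}_{\mathcal{I}}$ let $J_j=\bigcap\{I\in\mathcal{I}: j\in I\setminus\{\min I\}\}$ and $\mu_j=\min J_j$. For a permutation $\pi$, $\mathrm{Or}_\pi(I)=\pi(\min\{k:\pi(k)\in I\})$. Define $A_j=\mathrm{Or}_\pi$ for the permutation $\pi=1\,2\cdots(\mu_j-1)\,j\,\mu_j\cdots(j-1)\,(j+1)\cdots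 n$ (one-line notation); explicitly $A_j(J)=j$ if $j\in J$ and $\min J=\mu_j$, and $A_j(J)=\min J$ otherwise. An element of a lattice is join irreducible if it is not the minimum and covers exactly one element. *)

(* The ground set [n] = {1,...,n} is represented by 'I_n
   = {0,...,n-1} with its natural order (shift by one; only the order matters). *)
From mathcomp Require Import all_boot.
From Stdlib Require Import Relations.

Set Implicit Arguments.
Unset Strict Implicit.
Unset Printing Implicit Defensive.

Section Defs.
Variable n : nat.
Notation V := 'I_n.

Definition is_interval (A : {set V}) : Prop :=
  A != set0 /\
  forall x y z : V, x \in A -> z \in A -> (x <= y)%N -> (y <= z)%N -> y \in A.

Definition interval_hypergraph (I : {set {set V}}) : Prop :=
  (forall A, A \in I -> is_interval A) /\ (forall i : V, [set i] \in I).

Definition closed_under_intersection (I : {set {set V}}) : Prop :=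
  forall A B, A \in I -> B \in I -> A :&: B != set0 -> A :&: B \in I.

(* min A (for nonempty A); the default d is irrelevant for nonempty A *)
Definition minset (d : V) (A : {set V}) : V :=
  odflt d [pick i in A | [forall k in A, (val i <= val k)%N]].

Definition edge (I : {set {set V}}) := {H : {set V} | H \in I}.

Definition ormap (I : {set {set V}}) := {ffun edge I -> V}.

Definition is_orientation (I : {set {set V}}) (O : ormap I) : Prop :=
  forall H : edge I, O H \in val H.

Definition orrel (I : {set {set V}}) (O : ormap I) : rel (edge I) :=
  fun H H' => (O H' \in val H) && (O H' != O H).

Definition acyclic (I : {set {set V}}) (O : ormap I) : Prop :=
  ~ exists s : seq (edge I), (2 <= size s)%N /\ cycle (orrel O) s.

Definition acyc_or (I : {set {set V}}) (O : ormap I) : Prop :=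
  is_orientation O /\ acyclic O.

Definition incr_flip (I : {set {set V}}) (O O' : ormap I) : Prop :=
  O <> O' /\
  exists i j : V, (val i < val j)%N /\
    forall H : edge I,
      (O H <> O' H -> O H = i /\ O' H = j) /\
      (i \in val H -> j \in val H -> (O H = i <-> O' H = j)).

Definition flip_rel (I : {set {set V}}) : relation (ormap I) :=
  fun O O' => acyc_or O /\ acyc_or O' /\ incr_flip O O'.

Definition P_le (I : {set {set V}}) (O O' : ormap I) : Prop :=
  acyc_or O /\ acyc_or O' /\ clos_refl_trans (ormap I) (@flip_rel I) O O'.

Definition P_lt (I : {set {set V}}) (O O' : ormap I) : Prop :=
  P_le O O' /\ O <> O'.

Definition covers (I : {set {set V}}) (O O' : ormap I) : Prop :=
  P_lt O' O /\ ~ exists Z, P_lt O' Z /\ P_lt Z O.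

Definition join_irreducible (I : {set {set V}}) (O : ormap I) : Prop :=
  acyc_or O /\
  ~ (forall Z, acyc_or Z -> P_le O Z) /\
  exists O', covers O O' /\ forall O'', covers O O'' -> O'' = O'.

(* J_I = union of I \ {min I} *)
Definition in_JI (I : {set {set V}}) (j : V) : Prop :=
  exists2 H, H \in I & (j \in H) && (j != minset j H).

Definition Jj (I : {set {set V}}) (j : V) : {set V} :=
  \bigcap_(H in I | (j \in H) && (j != minset j H)) H.

Definition mu (I : {set {set V}}) (j : V) : V := minset j (Jj I j).

Definition A_fun (I : {set {set V}}) (j : V) (J : {set V}) : V :=
  if (j \in J) && (minset j J == mu I j) then j else minset j J.

Definition A_or (I : {set {set V}}) (j : V) : ormap I :=
  [ffun H : edge I => A_fun I j (val H)].

End Defs.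

From Stdlib Require Import Relations Classical.
From mathcomp Require Import all_boot zify.

(* Call an edge H special if j \in H and min H = mu_j, and let X_a send every
   special edge to a and every other edge to its minimum, so that A_j = X_j and
   X_(mu_j) orients every edge by its minimum.  An increasing flip ending at X_a
   cannot move a non-special edge, which already sits at its minimum, so it starts
   from some X_b with mu_j <= b < a.  Hence everything below A_j is some X_b
   with mu_j <= b <= j, these form a chain, and any two acyclic X_b are one
   flip apart.  So A_j is not below X_(mu_j), hence not the minimum, and it
   covers exactly X_b for the largest b < j with X_b acyclic. *)

Set Implicit Arguments.
Unset Strict Implicit.
Unset Printing Implicit Defensive.

Lemma ord_max_exists n (P : 'I_n -> Prop) :
  (exists a, P a) -> exists a, P a /\ forall b, P b -> (b <= a)%N.
Proof.
move=> [a0 Pa0]; apply: NNPP => nomax.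
have above k : exists2 a, P a & (k <= a)%N.
  elim: k => [|k [a Pa ka]]; first by exists a0.
  have [b [Pb ab]] : exists b, P b /\ (a < b)%N.
    apply: NNPP => nob; apply: nomax; exists a; split=> // b Pb.
    by rewrite leqNgt; apply/negP => ab; apply: nob; exists b.
  by exists b => //; lia.
by have [a _] := above n; rewrite leqNgt ltn_ord.
Qed.

Section MinSet.
Variables (n : nat) (d : 'I_n) (A : {set 'I_n}).
Hypothesis A_neq0 : A != set0.

Lemma minset_spec : (minset d A \in A) && [forall k in A, (minset d A <= k)%N].
Proof.
move/set0Pn: A_neq0 => [x xA]; rewrite /minset; case: pickP => [i //|none].
have [i iA imin] := arg_minnP (@nat_of_ord n) xA.
by move: (none i); rewrite /= (iA : i \in A) => /negP; case; apply/forall_inP.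
Qed.

Lemma minset_in : minset d A \in A.
Proof. by case/andP: minset_spec. Qed.

Lemma minset_le k : k \in A -> (minset d A <= k)%N.
Proof. by case/andP: minset_spec => _ /forall_inP; apply. Qed.

End MinSet.

Lemma acyclic_rank n (I : {set {set 'I_n}}) (O : ormap I) (r : 'I_n -> nat) :
  injective r -> (forall (H : edge I) x, x \in val H -> (r (O H) <= r x)%N) ->
  acyclic O.
Proof.
move=> r_inj r_min [[|H s] [//= _ cyc]].
have step : subrel (orrel O) (relpre (r \o O) ltn).
  move=> H1 H2 /andP [inH1 neq] /=; rewrite ltn_neqAle r_min // andbT.
  by apply: contra neq => /eqP /r_inj ->.
have lt_trans : transitive (relpre (r \o O) ltn) by move=> ? ? ? /=; apply: ltn_trans.
have := order_path_min lt_trans (sub_path step cyc).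
by rewrite all_rcons /= ltnn.
Qed.

Section SpecialOrientations.
Variables (n : nat) (I : {set {set 'I_n}}) (j : 'I_n).
Hypothesis hI : interval_hypergraph I.
Hypothesis hC : closed_under_intersection I.
Hypothesis hJ : in_JI I j.

Local Notation mu := (mu I j).
Local Notation m H := (minset j (val H)).

Definition special (H : edge I) : bool := (j \in val H) && (m H == mu).

Definition special_or (a : 'I_n) : ormap I :=
  [ffun H => if special H then a else m H].

Lemma A_or_special_or : A_or I j = special_or j.
Proof. by apply/ffunP => H; rewrite !ffunE. Qed.

Lemma edge_neq0 (H : edge I) : val H != set0.
Proof. exact: (hI.1 _ (valP H)).1. Qed.

Lemma edge_convex (H : edge I) (x y z : 'I_n) : x \in val H -> z \in val H ->
  (x <= y)%N -> (y <= z)%N -> y \in val H.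
Proof. exact: (hI.1 _ (valP H)).2. Qed.

Lemma min_edge_in (H : edge I) : m H \in val H.
Proof. exact/minset_in/edge_neq0. Qed.

Lemma min_edge_le (H : edge I) k : k \in val H -> (m H <= k)%N.
Proof. exact/minset_le/edge_neq0. Qed.

Lemma j_in_Jj : j \in Jj I j.
Proof. by apply/bigcapP => H /andP [_ /andP []]. Qed.

Lemma Jj_sub (H : {set 'I_n}) : H \in I -> (j \in H) && (j != minset j H) ->
  Jj I j \subset H.
Proof. by move=> HI jH; apply: bigcap_inf; rewrite HI jH. Qed.

(* [in_JI] makes the family nonempty, so J_j is not the [setT] of an empty
   [\bigcap]. *)
Lemma Jj_in_I : Jj I j \in I.
Proof.
case: hJ => H0 H0I jH0.
have : Jj I j = setT \/ (Jj I j \in I /\ j \in Jj I j).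
  rewrite /Jj; apply: (big_rec (fun J => J = setT \/ (J \in I /\ j \in J))) => [|H J].
    by left.
  move=> /andP [HI /andP [jH _]] [-> | [JI jJ]]; right; first by rewrite setIT.
  have jHJ : j \in H :&: J by rewrite inE jH jJ.
  by split=> //; apply: hC => //; apply/set0Pn; exists j.
case=> [JT | [] //]; suff H0T : H0 = setT by rewrite JT -H0T.
by apply/setP => x; rewrite inE; apply: (subsetP (Jj_sub H0I jH0)); rewrite JT inE.
Qed.

Lemma Jj_neq0 : Jj I j != set0.
Proof. by apply/set0Pn; exists j; exact: j_in_Jj. Qed.

Lemma mu_in_Jj : mu \in Jj I j.
Proof. exact/minset_in/Jj_neq0. Qed.

Lemma mu_le k : k \in Jj I j -> (mu <= k)%N.
Proof. exact/minset_le/Jj_neq0. Qed.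

Lemma min_edge_lt_j (H : edge I) : (j \in val H) && (j != m H) -> (m H < j)%N.
Proof.
case/andP => jH neq; rewrite ltn_neqAle min_edge_le // andbT.
by apply: contra neq => /eqP /val_inj ->.
Qed.

Lemma min_edge_le_mu (H : edge I) : (j \in val H) && (j != m H) -> (m H <= mu)%N.
Proof. by move=> jH; apply/min_edge_le/(subsetP (Jj_sub (valP H) jH))/mu_in_Jj. Qed.

(* Every edge in which j is not the minimum contains j - 1, hence so does J_j. *)
Lemma mu_lt_j : (mu < j)%N.
Proof.
case: hJ => H0 H0I jH0.
have := min_edge_lt_j (H := exist _ H0 H0I) jH0; rewrite /= => m0j.
have jpred_lt : (j.-1 < n)%N by apply: leq_ltn_trans (leq_pred _) (ltn_ord j).
suff /mu_le : Ordinal jpred_lt \in Jj I j by rewrite /=; lia.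
apply/bigcapP => H /andP [HI jH].
have := min_edge_lt_j (H := exist _ H HI) jH; rewrite /= => mj.
apply: (edge_convex (H := exist _ H HI) (min_edge_in _) (_ : j \in H)) => /=.
- by case/andP: jH.
- by lia.
- by lia.
Qed.

Definition Jedge : edge I := exist _ (Jj I j) Jj_in_I.

Lemma special_Jedge : special Jedge.
Proof. by rewrite /special /= j_in_Jj /=. Qed.

Lemma special_orS a (H : edge I) : special H -> special_or a H = a.
Proof. by move=> sH; rewrite ffunE sH. Qed.

Lemma special_orN a (H : edge I) : ~~ special H -> special_or a H = m H.
Proof. by move=> sH; rewrite ffunE (negbTE sH). Qed.

Lemma special_or_inj : injective special_or.
Proof.
move=> a b eq_ab.
by rewrite -(special_orS a special_Jedge) eq_ab (special_orS b special_Jedge).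
Qed.

Lemma special_or_min (H : edge I) : special_or mu H = m H.
Proof. by rewrite ffunE; case: ifP => // /andP [_ /eqP ->]. Qed.

Lemma special_edge_in (H : edge I) (x : 'I_n) : special H ->
  (mu <= x)%N -> (x <= j)%N -> x \in val H.
Proof.
case/andP => jH /eqP mH mux xj.
by apply: (edge_convex (min_edge_in H) jH); rewrite ?mH.
Qed.

Lemma special_or_orientation (a : 'I_n) : (mu <= a)%N -> (a <= j)%N ->
  is_orientation (special_or a).
Proof.
move=> mua aj H; rewrite ffunE; case: ifP => sH.
  exact: special_edge_in.
exact: min_edge_in.
Qed.

Lemma acyclic_special_or_mu : acyclic (special_or mu).
Proof.
apply: (@acyclic_rank _ _ _ (@nat_of_ord n)); first exact: ord_inj.
by move=> H x xH; rewrite special_or_min; exact: min_edge_le.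
Qed.

(* Rank j just below mu and every other x in its own place: A_j then picks the
   rank-minimum of every edge, because a non-special edge containing j either
   has minimum j or has a minimum strictly below mu. *)
Lemma acyclic_special_or_j : acyclic (special_or j).
Proof.
have muj := mu_lt_j.
pose r (x : 'I_n) := if x == j then (2 * mu)%N else (2 * x + 1)%N.
apply: (@acyclic_rank _ _ _ r).
  move=> x y; rewrite /r; case: (x =P j) => [->|xj]; case: (y =P j) => [->|yj] //;
    try lia.
  by move=> e; apply: ord_inj; lia.
move=> H x xH; rewrite /r; have mx := min_edge_le xH.
have [sH | sH] := boolP (special H).
  rewrite special_orS // eqxx; case: (x =P j) => // _.
  by case/andP: sH => _ /eqP mH; rewrite mH in mx; lia.
rewrite special_orN //; case: (m H =P j) => [mj | mnj].
  by case: (x =P j) => // _; rewrite mj in mx; lia.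
case: (x =P j) => [xj | _]; last by lia.
subst x; have jH : (j \in val H) && (j != m H) by rewrite xH eq_sym; apply/eqP.
have : m H != mu by move: sH; rewrite /special xH.
move: (min_edge_le_mu jH); rewrite leq_eqVlt => /orP [/eqP /ord_inj -> | ];
  [by rewrite eqxx | lia].
Qed.

Lemma flip_into_special_or (Y : ormap I) (a : 'I_n) : (mu <= a)%N -> (a <= j)%N ->
  flip_rel Y (special_or a) ->
  exists b : 'I_n, [/\ (mu <= b)%N, (b < a)%N & Y = special_or b].
Proof.
move=> mua aj [[oY _] [_ [neq [b [c [bc flip]]]]]]; rewrite /= in bc.
have [H0 YH0] : exists H0, Y H0 != special_or a H0.
  apply/existsP; apply: contra_notT neq => /existsPn same.
  by apply/ffunP => H; apply/eqP/negPn/same.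
have [Yb Xc] := (flip H0).1 (elimN eqP YH0).
have sH0 : special H0.
  apply: contraLR bc => sH0; move: Xc; rewrite special_orN // => Xc.
  by have := min_edge_le (oY H0); rewrite Yb Xc -leqNgt.
move: Xc; rewrite special_orS // => ac; subst c.
have mub : (mu <= b)%N.
  by case/andP: sH0 => _ /eqP <-; rewrite -Yb; exact: min_edge_le (oY H0).
exists b; split=> //; apply/ffunP => H.
have [sH | sH] := boolP (special H).
  have bH : b \in val H by apply: special_edge_in => //; lia.
  have aH : a \in val H by exact: special_edge_in.
  by rewrite (special_orS _ sH); apply/((flip H).2 bH aH).2; rewrite special_orS.
rewrite (special_orN _ sH); case: (Y H =P special_or a H) => [-> | neqH].
  exact: special_orN.
have [YHb] := (flip H).1 neqH; rewrite special_orN // => mHa.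
by have := min_edge_le (oY H); rewrite YHb mHa; lia.
Qed.

Lemma below_special_or (Y Z : ormap I) : clos_refl_trans _ (@flip_rel n I) Y Z ->
  forall a : 'I_n, (mu <= a)%N -> (a <= j)%N -> Z = special_or a ->
  exists b : 'I_n, [/\ (mu <= b)%N, (b <= a)%N & Y = special_or b].
Proof.
move=> YZ; have {YZ} := @clos_rt_rt1n _ _ _ _ YZ.
elim=> [Y' | Y' Y'' Z' flipY _ IH] a mua aj eZ; first by exists a.
have [b [mub ba eY'']] := IH a mua aj eZ; rewrite eY'' in flipY.
have [c [muc cb eY']] := flip_into_special_or mub (leq_trans ba aj) flipY.
by exists c; split=> //; lia.
Qed.

Lemma flip_special_or (b a : 'I_n) : (mu <= b)%N -> (b < a)%N -> (a <= j)%N ->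
  acyc_or (special_or b) -> acyc_or (special_or a) ->
  flip_rel (special_or b) (special_or a).
Proof.
move=> mub ba aj acb aca; do 2!split=> //; split.
  by move/special_or_inj => eq_ba; move: ba; rewrite eq_ba ltnn.
exists b, a; split=> // H; have [sH | sH] := boolP (special H).
  by rewrite !special_orS.
rewrite !special_orN //; split=> // bH aH; split=> mHb; last first.
  by have := min_edge_le bH; rewrite mHb; lia.
have bJ : b \in val Jedge by apply: special_edge_in special_Jedge _ _; lia.
have neq_ba : b != a by rewrite neq_ltn ba.
case: aca.2; exists [:: Jedge; H]; split=> //=.
rewrite /orrel !(special_orS _ special_Jedge) special_orN // mHb bJ aH /=.
by rewrite neq_ba eq_sym neq_ba.
Qed.

Lemma acyc_or_special_or (a : 'I_n) : (mu <= a)%N -> (a <= j)%N ->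
  acyclic (special_or a) -> acyc_or (special_or a).
Proof. by move=> mua aj aca; split=> //; apply: special_or_orientation. Qed.

Lemma acyc_or_special_or_j : acyc_or (special_or j).
Proof.
exact: acyc_or_special_or (ltnW mu_lt_j) (leqnn _) acyclic_special_or_j.
Qed.

Lemma special_or_j_not_bottom : ~ (forall Z, acyc_or Z -> P_le (special_or j) Z).
Proof.
have muj := mu_lt_j.
move=> bot; have acmu := acyc_or_special_or (leqnn _) (ltnW muj) acyclic_special_or_mu.
have [_ [_ le_j_mu]] := bot _ acmu.
have [b [_ bmu /special_or_inj ebj]] :=
  below_special_or le_j_mu (leqnn _) (ltnW muj) erefl.
by move: bmu; rewrite -ebj leqNgt muj.
Qed.

Lemma lt_special_or_j Z : P_lt Z (special_or j) ->
  exists b : 'I_n,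
    [/\ (mu <= b)%N, (b < j)%N, acyclic (special_or b) & Z = special_or b].
Proof.
move=> [[acZ [_ leZj]] neqZ].
have [b [mub bj eZ]] := below_special_or leZj (ltnW mu_lt_j) (leqnn _) erefl.
exists b; split=> //; last by rewrite -eZ; case: acZ.
rewrite ltn_neqAle bj andbT.
by apply: contra_not_neq neqZ => /ord_inj eq_bj; rewrite eZ eq_bj.
Qed.

Lemma lt_special_or (b a : 'I_n) : (mu <= b)%N -> (b < a)%N -> (a <= j)%N ->
  acyclic (special_or b) -> acyclic (special_or a) ->
  P_lt (special_or b) (special_or a).
Proof.
move=> mub ba aj acb aca.
have acb' := acyc_or_special_or mub (ltnW (leq_trans ba aj)) acb.
have aca' := acyc_or_special_or (ltnW (leq_ltn_trans mub ba)) aj aca.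
split; first by do 2!split=> //; apply: rt_step; apply: flip_special_or.
by move/special_or_inj => eq_ba; move: ba; rewrite eq_ba ltnn.
Qed.

Section LowerCover.
Variable a : 'I_n.
Hypotheses (mua : (mu <= a)%N) (aj : (a < j)%N) (aca : acyclic (special_or a)).
Hypothesis a_max : forall b : 'I_n,
  [/\ (mu <= b)%N, (b < j)%N & acyclic (special_or b)] -> (b <= a)%N.

Lemma covers_special_or_j : covers (special_or j) (special_or a).
Proof.
split; first exact: lt_special_or mua aj (leqnn _) aca acyclic_special_or_j.
move=> [Z [[leaZ neqaZ] ltZj]]; have [b [mub bj acb eZ]] := lt_special_or_j ltZj.
subst Z; have ba := a_max (And3 mub bj acb); case: leaZ => _ [_ leab].
have [c [_ ca /special_or_inj ec]] :=
  below_special_or leab mub (ltnW (leq_ltn_trans ba aj)) erefl.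
by subst c; apply: neqaZ; congr special_or; apply/val_inj/eqP; rewrite eqn_leq ca ba.
Qed.

Lemma covers_special_or_j_uniq O : covers (special_or j) O -> O = special_or a.
Proof.
move=> [ltOj no_between]; have [b [mub bj acb eO]] := lt_special_or_j ltOj.
subst O; move: (a_max (And3 mub bj acb)).
rewrite leq_eqVlt => /orP [/eqP /ord_inj -> // | ba].
case: no_between; exists (special_or a); split.
- exact: lt_special_or mub ba (ltnW aj) acb aca.
- exact: lt_special_or mua aj (leqnn _) aca acyclic_special_or_j.
Qed.

End LowerCover.

Lemma ex_max_acyclic_below_j : exists a : 'I_n,
  [/\ (mu <= a)%N, (a < j)%N & acyclic (special_or a)] /\
  forall b : 'I_n, [/\ (mu <= b)%N, (b < j)%N & acyclic (special_or b)] -> (b <= a)%N.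
Proof.
by apply: ord_max_exists; exists mu; split; [exact: leqnn | exact: mu_lt_j |
  exact: acyclic_special_or_mu].
Qed.

End SpecialOrientations.

Theorem proposition5p18 (n : nat) (I : {set {set 'I_n}}) :
  interval_hypergraph I -> closed_under_intersection I ->
  forall j : 'I_n, in_JI I j -> join_irreducible (A_or I j).
Proof.
move=> hI hC j hJ; rewrite A_or_special_or.
have [a [[mua aj aca] a_max]] := ex_max_acyclic_below_j hI hJ.
split; first exact: acyc_or_special_or_j.
split; first exact: special_or_j_not_bottom.
exists (special_or I j a); split; first exact: covers_special_or_j.
exact: covers_special_or_j_uniq.
Qed.
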